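(* Let $F$ be an algebraically closed field, $R$ an $F$-algebra, $\sigma$ an $F$-algebra automorphism of $R$, $\delta$ a $\sigma$-derivation of $R$, and $T=R[x;\sigma,\delta]$. Let $\mathfrak m$ be an ideal of $R$ with $R/\mathfrak m\cong F$, and suppose that $\sigma(\mathfrak m)\neq\mathfrak m$ and $\delta(\mathfrak m\cap\sigma^{-1}(\mathfrak m))\subseteq\mathfrak m$. Then there is a unique ideal $M$ of $T$ such that $M\cap R=\mathfrak m$. Moreover, $T/M\cong F$.
   Context: A $\sigma$-derivation is an $F$-linear map $\delta$ with $\delta(ab)=\delta(a)b+\sigma(a)\delta(b)$; $R[x;\sigma,\delta]$ is the algebra generated by $R$ and $x$ with $xr-\sigma(r)x=\delta(r)$ for $r\in R$. *)

From HB Require Import structures.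
From mathcomp Require Import all_boot all_order all_algebra.
Set Implicit Arguments. Unset Strict Implicit. Unset Printing Implicit Defensive.
Import GRing.Theory.
Local Open Scope ring_scope.

Definition is_ideal (A : pzRingType) (I : A -> Prop) : Prop :=
  [/\ I 0,
      (forall a b, I a -> I b -> I (a + b)),
      (forall a b, I b -> I (a * b)) &
      (forall a b, I a -> I (a * b))].

Definition is_alg_hom (F : fieldType) (A B : lalgType F) (f : A -> B) : Prop :=
  [/\ (forall a b, f (a + b) = f a + f b),
      (forall k a, f (k *: a) = k *: f a),
      (forall a b, f (a * b) = f a * f b) &
      f 1 = 1].

Definition is_alg_aut (F : fieldType) (A : lalgType F) (s : A -> A) : Prop :=
  is_alg_hom s /\ bijective s.

Definition is_sigma_derivation (F : fieldType) (A : lalgType F)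
    (s d : A -> A) : Prop :=
  [/\ (forall a b, d (a + b) = d a + d b),
      (forall k a, d (k *: a) = k *: d a) &
      (forall a b, d (a * b) = d a * b + s a * d b)].

(* A / I is isomorphic to F as an F-algebra: there is a surjective F-algebra
   homomorphism A -> F with kernel exactly I. *)
Definition quotient_iso_F (F : fieldType) (A : lalgType F) (I : A -> Prop) : Prop :=
  exists phi : A -> F,
    [/\ (forall a b, phi (a + b) = phi a + phi b),
        (forall k a, phi (k *: a) = k * phi a),
        (forall a b, phi (a * b) = phi a * phi b),
        phi 1 = 1 &
        ((forall k, exists a, phi a = k) /\
         (forall a, I a <-> phi a = 0))].

(* T, together with the embedding iota : R -> T and the element x, is the Ore
   extension R[x; s, d]: iota is an injective F-algebra map, x iota(r) -
   iota(s r) x = iota(d r), and T is a free left R-module on 1, x, x^2, ... *)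
Definition is_ore_extension (F : fieldType) (R T : lalgType F)
    (s d : R -> R) (iota : R -> T) (x : T) : Prop :=
  [/\ is_alg_hom iota,
      injective iota,
      (forall r, x * iota r - iota (s r) * x = iota (d r)),
      (forall t : T, exists c : seq R,
          t = \sum_(i < size c) iota c`_i * x ^+ i) &
      (forall c : seq R, \sum_(i < size c) iota c`_i * x ^+ i = 0 ->
          forall i, c`_i = 0)].

(* The character [phi : R -> F] with kernel [m] satisfies
   [phi (delta r) = lam * (phi r - phi (sigma r))] for a single scalar [lam]:
   apply the hypothesis on [delta] to commutators [a b - b a] and divide by
   [phi b - phi (sigma b)] for some [b], which exists because [sigma] moves [m].
   This identity makes "evaluation at [x = lam]",
   [sum_i r_i x^i |-> sum_i phi r_i lam^i], multiplicative on [T]; its kernel is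
   the required [M], and [T / M = F]. Conversely, reading [x b - sigma b x = delta b]
   modulo any ideal [M'] with [M' \cap R = m] gives [x - lam \in M'], so every
   [t] is congruent to its evaluation modulo [M'] and [M' = M]. *)

From HB Require Import structures.
From mathcomp Require Import all_boot all_order all_algebra all_field.
From mathcomp Require Import ring.
From Stdlib Require Import Classical.
Set Implicit Arguments. Unset Strict Implicit. Unset Printing Implicit Defensive.
Import GRing.Theory.
Local Open Scope ring_scope.

Lemma additive0 (U V : zmodType) (f : U -> V) : {morph f : a b / a + b} -> f 0 = 0.
Proof. by move=> fD; apply: (addrI (f 0)); rewrite -fD !addr0. Qed.

Lemma additiveB (U V : zmodType) (f : U -> V) :
  {morph f : a b / a + b} -> {morph f : a b / a - b}.
Proof. by move=> fD a b; apply: (addIr (f b)); rewrite -fD !subrK. Qed.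

Lemma subrACA (V : zmodType) (a b c d : V) : a - b - (c - d) = a - c - (b - d).
Proof. by rewrite !opprB addrACA [RHS]addrACA addrC [- c + _]addrC [RHS]addrC. Qed.

Section IdealClosure.
Variables (F : fieldType) (A : lalgType F) (I : A -> Prop).
Hypothesis I_ideal : is_ideal I.

Lemma idealD a b : I a -> I b -> I (a + b).
Proof. by case: I_ideal => _ ID _ _; apply: ID. Qed.

Lemma idealMl a b : I b -> I (a * b).
Proof. by case: I_ideal => _ _ IL _; apply: IL. Qed.

Lemma idealMr a b : I a -> I (a * b).
Proof. by case: I_ideal => _ _ _ IR; apply: IR. Qed.

Lemma idealN a : I a -> I (- a).
Proof. by case: I_ideal => _ _ IL _ Ia; rewrite -mulN1r; apply: IL. Qed.

Lemma idealB a b : I a -> I b -> I (a - b).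
Proof. by case: I_ideal => _ ID _ _ Ia Ib; apply: ID => //; apply: idealN. Qed.

Lemma idealZ k a : I a -> I (k *: a).
Proof. by case: I_ideal => _ _ IL _ Ia; rewrite -[a]mul1r scalerAl; apply: IL. Qed.

End IdealClosure.

Lemma sigma_moves_kernel (F : fieldType) (R : Type) (sigma : R -> R)
    (phi : R -> F) (m : R -> Prop) :
  bijective sigma -> (forall a, m a <-> phi a = 0) ->
  ~ (forall y, (exists r, m r /\ y = sigma r) <-> m y) ->
  exists b, phi b != phi (sigma b).
Proof.
move=> [g _ sigmaVK] mE sigma_m; apply: NNPP => no_b; apply: sigma_m => y.
have phiE a : phi a = phi (sigma a) by apply: (contra_not_eq _ no_b) => ?; exists a.
split=> [[r [/mE mr ->]] | /mE my]; first by apply/mE; rewrite -phiE.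
by exists (g y); rewrite sigmaVK; split=> //; apply/mE; rewrite phiE sigmaVK.
Qed.

Section TwistedCharacter.
Variables (F : fieldType) (R : pzRingType) (sigma delta : R -> R) (phi : R -> F).
Hypotheses (sigmaD : {morph sigma : a b / a + b}) (sigmaM : {morph sigma : a b / a * b}).
Hypotheses (deltaD : {morph delta : a b / a + b})
  (deltaM : forall a b, delta (a * b) = delta a * b + sigma a * delta b).
Hypotheses (phiD : {morph phi : a b / a + b}) (phiM : {morph phi : a b / a * b}).
Hypothesis delta_ker : forall r, phi r = 0 -> phi (sigma r) = 0 -> phi (delta r) = 0.

Lemma phi_delta_cross a b :
  phi (delta a) * (phi b - phi (sigma b)) = phi (delta b) * (phi a - phi (sigma a)).
Proof.
have phiB := additiveB phiD; have sigmaB := additiveB sigmaD.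
have := delta_ker (r := a * b - b * a).
rewrite (additiveB deltaD) !deltaM sigmaB !sigmaM !phiB !phiD !phiM.
rewrite [phi b * _]mulrC [phi (sigma b) * _]mulrC !subrr => /(_ erefl erefl) E0.
by apply/eqP; rewrite -subr_eq0 -E0; apply/eqP; ring.
Qed.

Lemma phi_delta_slope b : phi b != phi (sigma b) ->
  exists lam, forall r, phi (delta r) = lam * (phi r - phi (sigma r)).
Proof.
move=> neq_b; exists (phi (delta b) / (phi b - phi (sigma b))) => r.
by rewrite mulrAC -phi_delta_cross mulfK // subr_eq0.
Qed.

End TwistedCharacter.

Section OreEvaluation.
Variables (F : fieldType) (R T : algType F) (sigma delta : R -> R) (iota : R -> T) (x : T).
Hypotheses (iotaD : {morph iota : a b / a + b}) (iotaM : {morph iota : a b / a * b})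
  (iotaZ : forall k a, iota (k *: a) = k *: iota a) (iota1 : iota 1 = 1).
Hypothesis ore_comm : forall r, x * iota r - iota (sigma r) * x = iota (delta r).
Hypothesis ore_span : forall t, exists c : seq R, t = \sum_(i < size c) iota c`_i * x ^+ i.
Hypothesis ore_free :
  forall c : seq R, \sum_(i < size c) iota c`_i * x ^+ i = 0 -> forall i, c`_i = 0.
Variables (phi : R -> F) (lam : F).
Hypotheses (phiD : {morph phi : a b / a + b}) (phiM : {morph phi : a b / a * b})
  (phiZ : forall k a, phi (k *: a) = k * phi a) (phi1 : phi 1 = 1).
Hypothesis phi_delta : forall r, phi (delta r) = lam * (phi r - phi (sigma r)).

Definition ore_sum (f : nat -> R) n : T := \sum_(i < n) iota (f i) * x ^+ i.
Definition ore_eval (f : nat -> R) n : F := \sum_(i < n) phi (f i) * lam ^+ i.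

Let iota0 := additive0 iotaD.
Let phi0 := additive0 phiD.

Lemma ore_sum_widen f n N : (n <= N)%N ->
  ore_sum f n = ore_sum (fun i => if (i < n)%N then f i else 0) N.
Proof.
move=> le_nN; rewrite /ore_sum (big_ord_widen _ (fun i => iota (f i) * x ^+ i) le_nN) big_mkcond.
by apply: eq_bigr => i _; case: ifP; rewrite ?iota0 ?mul0r.
Qed.

Lemma ore_eval_widen f n N : (n <= N)%N ->
  ore_eval f n = ore_eval (fun i => if (i < n)%N then f i else 0) N.
Proof.
move=> le_nN; rewrite /ore_eval (big_ord_widen _ (fun i => phi (f i) * lam ^+ i) le_nN) big_mkcond.
by apply: eq_bigr => i _; case: ifP; rewrite ?phi0 ?mul0r.
Qed.

Lemma ore_sum_inj f g n : ore_sum f n = ore_sum g n -> forall i, (i < n)%N -> f i = g i.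
Proof.
move=> Efg i lt_in; apply/eqP; rewrite -subr_eq0; apply/eqP.
rewrite -(nth_mkseq 0 (fun j => f j - g j) lt_in); apply: ore_free.
transitivity (ore_sum f n - ore_sum g n); last by rewrite Efg subrr.
rewrite size_mkseq /ore_sum -sumrB.
by apply: eq_bigr => j _; rewrite nth_mkseq // (additiveB iotaD) mulrBl.
Qed.

Lemma ore_eval_sum f n g k : ore_sum f n = ore_sum g k -> ore_eval f n = ore_eval g k.
Proof.
have [le_nk le_kn] := (leq_addr k n, leq_addl n k).
rewrite (ore_sum_widen f le_nk) (ore_sum_widen g le_kn).
rewrite (ore_eval_widen f le_nk) (ore_eval_widen g le_kn) => /ore_sum_inj Efg.
by apply: eq_bigr => i _; rewrite Efg.
Qed.

Lemma ore_sumP t : exists f n, t = ore_sum f n.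
Proof. by have [c ->] := ore_span t; exists (nth 0 c), (size c). Qed.

Lemma ore_span_eq t : exists c : seq R, t == ore_sum (nth 0 c) (size c).
Proof. by have [c /eqP] := ore_span t; exists c. Qed.

Definition ore_coefs t : seq R := xchoose (ore_span_eq t).

Definition ore_char t : F := ore_eval (nth 0 (ore_coefs t)) (size (ore_coefs t)).

Lemma ore_char_sum f n : ore_char (ore_sum f n) = ore_eval f n.
Proof. by apply: ore_eval_sum; apply/esym/eqP; exact: (xchooseP (ore_span_eq _)). Qed.

Lemma ore_char_iota r : ore_char (iota r) = phi r.
Proof.
have -> : iota r = ore_sum (fun=> r) 1 by rewrite /ore_sum big_ord1 mulr1.
by rewrite ore_char_sum /ore_eval big_ord1 mulr1.
Qed.

Lemma ore_charD t u : ore_char (t + u) = ore_char t + ore_char u.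
Proof.
have [[f [n ->]] [g [k ->]]] := (ore_sumP t, ore_sumP u).
have [le_nk le_kn] := (leq_addr k n, leq_addl n k).
rewrite (ore_sum_widen f le_nk) (ore_sum_widen g le_kn).
set f' := fun i => _; set g' := fun i => _.
have -> : ore_sum f' (n + k) + ore_sum g' (n + k) = ore_sum (fun i => f' i + g' i) (n + k).
  by rewrite /ore_sum -big_split; apply: eq_bigr => i _; rewrite iotaD mulrDl.
rewrite !ore_char_sum /ore_eval -big_split.
by apply: eq_bigr => i _; rewrite phiD mulrDl.
Qed.

Let ore_char0 := additive0 ore_charD.

Lemma ore_char_big n (G : 'I_n -> T) : ore_char (\sum_(i < n) G i) = \sum_(i < n) ore_char (G i).
Proof. exact: (big_morph ore_char ore_charD ore_char0). Qed.

Lemma ore_char_mulx t : ore_char (t * x) = ore_char t * lam.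
Proof.
have [f [n ->]] := ore_sumP t.
have -> : ore_sum f n * x = ore_sum (fun i => if i is j.+1 then f j else 0) n.+1.
  rewrite /ore_sum big_ord_recl /= iota0 mul0r add0r mulr_suml.
  by apply: eq_bigr => i _; rewrite exprSr mulrA.
rewrite !ore_char_sum /ore_eval big_ord_recl /= phi0 mul0r add0r mulr_suml.
by apply: eq_bigr => i _; rewrite exprSr mulrA.
Qed.

Lemma ore_char_mulXn t i : ore_char (t * x ^+ i) = ore_char t * lam ^+ i.
Proof.
elim: i => [|i IHi]; first by rewrite !expr0 !mulr1.
by rewrite !exprSr mulrA ore_char_mulx IHi mulrA.
Qed.

(* Moving [iota r] past [x] costs [x iota r = iota (sigma r) x + iota (delta r)], and
   [phi_delta] is exactly what makes the two terms recombine. *)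
Lemma ore_char_monomial c i r :
  ore_char (iota c * x ^+ i * iota r) = phi c * lam ^+ i * phi r.
Proof.
elim: i r => [|i IHi] r; first by rewrite !expr0 !mulr1 -iotaM ore_char_iota phiM.
have -> : iota c * x ^+ i.+1 * iota r =
    iota c * x ^+ i * iota (sigma r) * x + iota c * x ^+ i * iota (delta r).
  by rewrite exprSr -!mulrA -!mulrDr -ore_comm addrC subrK.
by rewrite ore_charD ore_char_mulx !IHi phi_delta exprSr; ring.
Qed.

Lemma ore_char_mul_iota t r : ore_char (t * iota r) = ore_char t * phi r.
Proof.
have [f [n ->]] := ore_sumP t.
rewrite ore_char_sum /ore_sum mulr_suml ore_char_big /ore_eval mulr_suml.
by apply: eq_bigr => i _; rewrite ore_char_monomial.
Qed.

Lemma ore_charM t u : ore_char (t * u) = ore_char t * ore_char u.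
Proof.
have [g [k ->]] := ore_sumP u.
rewrite ore_char_sum /ore_sum mulr_sumr ore_char_big /ore_eval mulr_sumr.
by apply: eq_bigr => i _; rewrite mulrA ore_char_mulXn ore_char_mul_iota mulrA.
Qed.

Lemma ore_char1 : ore_char 1 = 1.
Proof. by rewrite -iota1 ore_char_iota. Qed.

Lemma ore_charZ k t : ore_char (k *: t) = k * ore_char t.
Proof.
have -> : k *: t = iota k%:A * t by rewrite iotaZ iota1 mulr_algl.
by rewrite ore_charM ore_char_iota phiZ phi1 mulr1.
Qed.

Section IdealsAboveKernel.
Variable I : T -> Prop.
Hypotheses (I_ideal : is_ideal I) (I_iota : forall r, I (iota r) <-> phi r = 0).
Variable b : R.
Hypothesis phi_sigma_b : phi b != phi (sigma b).

Lemma ideal_iota_sub r : I (iota r - (phi r)%:A).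
Proof.
have -> : iota r - (phi r)%:A = iota (r - (phi r)%:A) by rewrite (additiveB iotaD) iotaZ iota1.
by apply/I_iota; rewrite (additiveB phiD) phiZ phi1 mulr1 subrr.
Qed.

Lemma ideal_x_sub : I (x - lam%:A).
Proof.
pose mu := phi b - phi (sigma b); have mu_neq0 : mu != 0 by rewrite subr_eq0.
have I_mu : I (mu *: (lam%:A - x)).
  have -> : mu *: (lam%:A - x) = x * (iota b - (phi b)%:A)
      - (iota (sigma b) - (phi (sigma b))%:A) * x - (iota (delta b) - (phi (delta b))%:A).
    rewrite mulrBr mulrBl mulr_algr mulr_algl (subrACA (x * _)) ore_comm -scalerBl -/mu.
    by rewrite subrACA subrr sub0r opprB phi_delta scalerBr scalerA mulrC.
  apply: (idealB I_ideal); first apply: (idealB I_ideal).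
  - exact/(idealMl I_ideal)/ideal_iota_sub.
  - exact/(idealMr I_ideal)/ideal_iota_sub.
  - exact: ideal_iota_sub.
have -> : x - lam%:A = (- mu^-1) *: (mu *: (lam%:A - x)).
  by rewrite scalerA mulNr mulVf // scaleN1r opprB.
exact: (idealZ I_ideal).
Qed.

Lemma ideal_Xn_sub i : I (x ^+ i - (lam ^+ i)%:A).
Proof.
elim: i => [|i IHi]; first by rewrite !expr0 scale1r subrr; case: I_ideal.
have -> : x ^+ i.+1 - (lam ^+ i.+1)%:A =
    (x ^+ i - (lam ^+ i)%:A) * x + (lam ^+ i)%:A * (x - lam%:A).
  by rewrite mulrBl mulrBr !mulr_algl scalerA -!exprSr addrA subrK.
by apply: (idealD I_ideal); [apply: (idealMr I_ideal) | apply/(idealMl I_ideal)/ideal_x_sub].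
Qed.

Lemma ideal_sub_char t : I (t - (ore_char t)%:A).
Proof.
have [f [n ->]] := ore_sumP t; rewrite ore_char_sum /ore_sum /ore_eval scaler_suml -sumrB.
apply: (big_ind I); [by case: I_ideal | exact: (idealD I_ideal) |] => i _.
have -> : iota (f i) * x ^+ i - (phi (f i) * lam ^+ i)%:A =
    iota (f i) * (x ^+ i - (lam ^+ i)%:A) + (iota (f i) - (phi (f i))%:A) * (lam ^+ i)%:A.
  by rewrite mulrBr mulrBl !mulr_algr addrA subrK scalerA mulrC.
apply: (idealD I_ideal).
- exact/(idealMl I_ideal)/ideal_Xn_sub.
- exact/(idealMr I_ideal)/ideal_iota_sub.
Qed.

Lemma ideal_eq_ker_char t : I t <-> ore_char t = 0.
Proof.
split=> [It | char0]; last by have := ideal_sub_char t; rewrite char0 scale0r subr0.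
have [//|char_neq0] := eqVneq (ore_char t) 0.
have := idealB I_ideal It (ideal_sub_char t); rewrite subKr => I_char.
have I1 : I 1 by rewrite -(scale1r 1) -(mulVf char_neq0) -scalerA; apply: (idealZ I_ideal).
have := proj1 (I_iota 1); rewrite iota1 phi1 => /(_ I1) /eqP.
by rewrite oner_eq0.
Qed.
End IdealsAboveKernel.

Lemma ore_char_kernel_unique b : phi b != phi (sigma b) ->
  exists M : T -> Prop,
    [/\ is_ideal M,
        (forall r, M (iota r) <-> phi r = 0),
        (forall M' : T -> Prop, is_ideal M' ->
            (forall r, M' (iota r) <-> phi r = 0) -> forall t, M' t <-> M t) &
        quotient_iso_F M].
Proof.
move=> phi_sigma_b; exists (fun t => ore_char t = 0); split.
- split=> [|t u t0 u0|t u u0|t u t0];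
    by rewrite ?ore_char0 ?ore_charD ?ore_charM ?t0 ?u0 ?addr0 ?mulr0 ?mul0r.
- by move=> r; rewrite ore_char_iota.
- by move=> M' M'_ideal M'_iota t; apply: ideal_eq_ker_char phi_sigma_b t.
exists ore_char; split; [exact: ore_charD | exact: ore_charZ | exact: ore_charM |
  exact: ore_char1 | split=> // k].
by exists k%:A; rewrite ore_charZ ore_char1 mulr1.
Qed.

End OreEvaluation.

Theorem proposition4p3 (F : closedFieldType) (R T : algType F)
  (sigma delta : R -> R) (iota : R -> T) (x : T) (m : R -> Prop) :
  is_alg_aut sigma ->
  is_sigma_derivation sigma delta ->
  is_ore_extension sigma delta iota x ->
  is_ideal m ->
  quotient_iso_F m ->
  ~ (forall y, (exists r, m r /\ y = sigma r) <-> m y) ->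
  (forall r, m r -> m (sigma r) -> m (delta r)) ->
  exists M : T -> Prop,
    [/\ is_ideal M,
        (forall r, M (iota r) <-> m r),
        (forall M' : T -> Prop, is_ideal M' ->
            (forall r, M' (iota r) <-> m r) -> forall t, M' t <-> M t) &
        quotient_iso_F M].
Proof.
move=> [[sigmaD _ sigmaM _] sigma_bij] [deltaD _ deltaM]
  [[iotaD iotaZ iotaM iota1] _ ore_comm ore_span ore_free] _
  [phi [phiD phiZ phiM phi1 [_ phi_ker]]] sigma_m delta_m.
have [b phi_sigma_b] := sigma_moves_kernel sigma_bij phi_ker sigma_m.
have delta_ker r : phi r = 0 -> phi (sigma r) = 0 -> phi (delta r) = 0.
  by move=> /phi_ker mr /phi_ker msr; apply/phi_ker/delta_m.
have [lam phi_delta] := phi_delta_slope sigmaD sigmaM deltaD deltaM phiD phiM delta_ker phi_sigma_b.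
have [M [M_ideal M_iota M_unique M_quot]] :=
  ore_char_kernel_unique iotaD iotaM iotaZ iota1 ore_comm ore_span ore_free
    phiD phiM phiZ phi1 phi_delta phi_sigma_b.
have ker_iff (I : T -> Prop) : (forall r, I (iota r) <-> phi r = 0) <-> (forall r, I (iota r) <-> m r).
  by split=> I_iota r; rewrite I_iota phi_ker.
exists M; split=> //; first exact/ker_iff.
by move=> M' M'_ideal /ker_iff; apply: M_unique.
Qed.
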